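(* Consider the damped wave equation $u_{tt}=u_{xx}-\gamma(x)u_t+g(x,t)$ on $a\le x\le b$ with Dirichlet boundary data $u(a,t)=u_a(t)$, $u(b,t)=u_b(t)$ and initial data $u(x,0)=\phi(x)$, $u_t(x,0)=\psi(x)$, where $\gamma\ge 0$. Let $h=(b-a)/N$, $k>0$ the time step, and let $\mathcal{M}$ be the $(2N-2)\times(2N-2)$ block matrix $$\mathcal{M}=\begin{pmatrix}0 & I\\ \frac{1}{h^2}A & -\Gamma\end{pmatrix},$$ where $I$ is the $(N-1)\times(N-1)$ identity, $A$ is the $(N-1)\times(N-1)$ tridiagonal matrix with $-2$ on the diagonal and $1$ on the off-diagonals, and $\Gamma=\mathrm{diag}(\gamma(x_1),\dots,\gamma(x_{N-1}))$ with $x_i=a+ih$. Then the implicit scheme FD-(1,1), $$\big(I-\tfrac12\mathcal{M}k\big)V^{n+1}=\big(I+\tfrac12\mathcal{M}k\big)V^n+\tfrac{k}{2}\big(I+\tfrac12\mathcal{M}k\big)F(t_n)+\tfrac{k}{2}\big(I-\tfrac12\mathcal{M}k\big)F(t_n+k),$$ is unconditionally stable, i.e. stable for all $h>0$ and $k>0$.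
   Context: The scheme arises by writing $U=(u,u_t)^T$, discretizing $u_{xx}$ by central differences at interior nodes $x_1,\dots,x_{N-1}$, giving $V'(t)=\mathcal{M}V(t)+F(t)$ with $V(t)=(u(x_1,t),\dots,u(x_{N-1},t),u_t(x_1,t),\dots,u_t(x_{N-1},t))^T$ and $F(t)=(0,\,G(t)+\frac{1}{h^2}B(t))^T$, $G(t)=(g(x_1,t),\dots,g(x_{N-1},t))^T$, $B(t)=(u_a(t),0,\dots,0,u_b(t))^T$; $V^n$ approximates $V(t_n)$, $t_n=nk$. A scheme is called stable if all eigenvalues of its amplification matrix (here $(I-\frac12 k\mathcal{M})^{-1}(I+\frac12 k\mathcal{M})$) lie in the closed unit disk. *)

(* Real scalars: an arbitrary real closed field R (e.g. the reals);
   eigenvalues are taken in the algebraic closure R[i] (complex numbers over R). *)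
From HB Require Import structures.
From mathcomp Require Import all_boot all_order all_algebra.
From mathcomp Require Export complex.
Unset Printing Implicit Defensive.
Import Order.TTheory GRing.Theory Num.Theory.
Local Open Scope ring_scope.

Section FD11.
Variable R : rcfType.

Definition mesh (a b : R) (N : nat) : R := (b - a) / N%:R.

(* interior node x_i = a + i h, for i = 1..N-1; index j : 'I_(N.-1) stands for i = j+1 *)
Definition node (a b : R) (N : nat) (j : 'I_N.-1) : R := a + (j.+1)%:R * mesh a b N.

Definition Atri (n : nat) : 'M[R]_n :=
  \matrix_(i < n, j < n)
    (if i == j then -2 else if (i.+1 == j) || (j.+1 == i) then 1 else 0).

Definition Gam (a b : R) (N : nat) (gamma : R -> R) : 'M[R]_N.-1 :=
  diag_mx (\row_j gamma (node a b N j)).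

Definition Mblk (a b : R) (N : nat) (gamma : R -> R) : 'M[R]_(N.-1 + N.-1) :=
  block_mx 0 1%:M ((mesh a b N ^- 2) *: Atri N.-1) (- Gam a b N gamma).

Definition Iminus (a b : R) (N : nat) (gamma : R -> R) (k : R) : 'M[R]_(N.-1 + N.-1) :=
  1%:M - (k / 2) *: Mblk a b N gamma.
Definition Iplus (a b : R) (N : nat) (gamma : R -> R) (k : R) : 'M[R]_(N.-1 + N.-1) :=
  1%:M + (k / 2) *: Mblk a b N gamma.

Definition amplification (a b : R) (N : nat) (gamma : R -> R) (k : R) : 'M[R]_(N.-1 + N.-1) :=
  invmx (Iminus a b N gamma k) *m Iplus a b N gamma k.

Definition stable_amp (m : nat) (G : 'M[R]_m) : Prop :=
  forall lam : R[i], eigenvalue (map_mx (real_complex R) G) lam -> `|lam| <= 1.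

End FD11.

Arguments mesh {R}. Arguments node {R}. Arguments Atri {R}. Arguments Gam {R}.
Arguments Mblk {R}. Arguments Iminus {R}. Arguments Iplus {R}.
Arguments amplification {R}. Arguments stable_amp {R m}.

(* Write A = - D D^T with D the forward-difference matrix.  If (x, y) is a
   left eigenvector of M with eigenvalue mu, then x = mu y + y Gamma and
   eliminating x gives
     mu^2 |y|^2 + mu <y Gamma, y> + h^-2 |y D|^2 = 0,
   a quadratic with positive leading coefficient and nonnegative other
   coefficients, so Re mu <= 0.  The amplification matrix is the Cayley
   transform of (k/2) M: its eigenvalues are (1 + z) / (1 - z) with
   z = k mu / 2, and Re z <= 0 means |1 + z| <= |1 - z|. *)

From HB Require Import structures.
From mathcomp Require Import all_boot all_order all_algebra.
From mathcomp Require Import complex ring lra zify.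
Import Order.TTheory GRing.Theory Num.Theory.
Local Open Scope ring_scope.
Local Open Scope complex_scope.
Set Implicit Arguments.
Unset Strict Implicit.

Section FD11Stability.
Variable R : rcfType.
Local Notation rc := (real_complex R).

Lemma Re_quadratic_root_le0 (p q r mu : R[i]) :
  0 < p -> 0 <= q -> 0 <= r -> p * mu ^+ 2 + q * mu + r = 0 -> complex.Re mu <= 0.
Proof.
case: p => p1 p2; case: q => q1 q2; case: r => r1 r2; case: mu => x y.
rewrite !ltcE !lecE /= => /andP[/eqP-> p_gt0] /andP[/eqP-> q_ge0].
move=> /andP[/eqP-> r_ge0].
rewrite expr2; simpc => /eqP; rewrite eq_complex /= => /andP[/eqP ReE /eqP ImE].
rewrite leNgt; apply/negP => x_gt0.
have px_gt0 := mulr_gt0 p_gt0 x_gt0.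
have y0 : y = 0.
  have : y * (2 * p1 * x + q1) = 0 by rewrite -ImE; ring.
  by move/eqP; rewrite mulf_eq0 => /orP[/eqP //|]; rewrite gt_eqF //; lra.
subst y; have := mulr_gt0 px_gt0 x_gt0; have := mulr_ge0 q_ge0 (ltW x_gt0); lra.
Qed.

Lemma cayley_norm_le1 (z lam : R[i]) :
  complex.Re z <= 0 -> lam * (1 - z) = 1 + z -> `|lam| <= 1.
Proof.
move=> Rez_le0 lamE.
have den_gt0 : 0 < `|1 - z|.
  rewrite normr_gt0 subr_eq0; apply: contraTneq Rez_le0 => <- /=.
  by rewrite lt_geF ?ltr01.
have num_le : `|1 + z| <= `|1 - z|.
  rewrite -ler_sqr ?nnegrE ?normr_ge0 // -!add_Re2_Im2 lecR.
  by case: z Rez_le0 {lamE den_gt0} => x y /= x_le0; nra.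
by rewrite -(ger_pMl _ den_gt0) -normrM lamE.
Qed.

Definition adjmx m n (A : 'M[R[i]]_(m, n)) : 'M[R[i]]_(n, m) := (map_mx conjc A)^T.

Lemma mul_adj_row_ge0 n (y : 'rV[R[i]]_n) : 0 <= (y *m adjmx y) 0 0.
Proof. by rewrite !mxE sumr_ge0 // => j _; rewrite !mxE mulcJ_ge0. Qed.

Lemma mul_adj_row_gt0 n (y : 'rV[R[i]]_n) : y != 0 -> 0 < (y *m adjmx y) 0 0.
Proof.
move=> y_neq0; have [j yj_neq0] : exists j, y 0 j != 0.
  apply/existsP; apply: contraNT y_neq0; rewrite negb_exists => /forallP y0.
  by apply/eqP/rowP => j; rewrite mxE; apply/eqP/negPn.
rewrite !mxE (bigD1 j) //= ltr_pwDl ?sumr_ge0 // => [|i _]; rewrite !mxE.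
  by rewrite lt_def mulcJ_ge0 mulf_neq0 ?conjc_eq0.
exact: mulcJ_ge0.
Qed.

Lemma mul_diag_adj_row_ge0 n (g : 'rV[R[i]]_n) (y : 'rV[R[i]]_n) :
  (forall j, 0 <= g 0 j) -> 0 <= (y *m diag_mx g *m adjmx y) 0 0.
Proof.
move=> g_ge0; rewrite mul_mx_diag !mxE sumr_ge0 // => j _.
by rewrite !mxE mulrAC mulr_ge0 ?mulcJ_ge0.
Qed.

Lemma damped_eigenvalue_Re_le0 n p (B : 'M[R[i]]_(n, p)) (g : 'rV[R[i]]_n) mu :
  (forall j, 0 <= g 0 j) ->
  eigenvalue (block_mx 0 1%:M (- (B *m adjmx B)) (- diag_mx g)) mu ->
  complex.Re mu <= 0.
Proof.
move=> g_ge0 /eigenvalueP [w].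
rewrite -[w]hsubmxK mul_row_block scale_row_mx => /eq_row_mx [Ex Ey] w_neq0.
move: Ex Ey w_neq0; set x := lsubmx w; set y := rsubmx w => Ex Ey w_neq0.
rewrite mulmx0 add0r in Ex; rewrite mulmx1 mulmxN in Ey.
have xE : x = mu *: y + y *m diag_mx g by rewrite -Ey subrK.
have y_neq0 : y != 0.
  by apply: contraNneq w_neq0 => y0; rewrite xE y0 scaler0 mul0mx addr0 row_mx0.
have adj_yB : adjmx B *m adjmx y = adjmx (y *m B) by rewrite /adjmx map_mxM trmx_mul.
have := congr1 (fun X => (X *m adjmx y) 0 0) Ex => /=.
rewrite xE mulmxN mulNmx mulmxA -(mulmxA (y *m B)) adj_yB.
rewrite scalerDr scalerA mulmxDl -!scalemxAl => quadE.
apply: (Re_quadratic_root_le0 (mul_adj_row_gt0 y_neq0)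
          (mul_diag_adj_row_ge0 y g_ge0) (mul_adj_row_ge0 (y *m B))).
rewrite !mxE in quadE *; rewrite -[X in _ + X]opprK quadE; ring.
Qed.

(* [map_mxZ] with the scalar elaborated as [c%:C], so that it can be
   abstracted in the entrywise computation of [cayley_stable]. *)
Lemma map_real_scale m n (c : R) (A : 'M[R]_(m, n)) :
  map_mx rc (c *: A) = c%:C *: map_mx rc A.
Proof. exact: map_mxZ. Qed.

Section Cayley.
Variables (m : nat) (M : 'M[R]_m) (c : R).
Hypothesis c_gt0 : 0 < c.
Hypothesis Re_eigenvalue_le0 :
  forall mu, eigenvalue (map_mx rc M) mu -> complex.Re mu <= 0.

Lemma cayley_unitmx : 1%:M - c *: M \in unitmx.
Proof.
rewrite unitmxE unitfE; apply/negP => /det0P [v v_neq0].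
rewrite mulmxBr mulmx1 -scalemxAr => /eqP; rewrite subr_eq0 => /eqP vE.
have : eigenvalue M c^-1.
  by apply/eigenvalueP; exists v; rewrite // {2}vE scalerA mulVf ?scale1r ?gt_eqF.
rewrite -(eigenvalue_map rc) => /Re_eigenvalue_le0 /=.
by rewrite leNgt invr_gt0 c_gt0.
Qed.

Lemma cayley_stable : stable_amp (invmx (1%:M - c *: M) *m (1%:M + c *: M)).
Proof.
move=> lam /eigenvalueP [v]; rewrite map_mxM map_invmx => vE v_neq0.
move: vE; set Im := map_mx rc _; set Ip := map_mx rc _ => vE.
have Im_unit : Im \in unitmx by rewrite map_unitmx cayley_unitmx.
set w := v *m invmx Im.
have w_neq0 : w != 0.
  by apply: contraNneq v_neq0 => w0; rewrite -(mulmxKV Im_unit v) -/w w0 mul0mx.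
have wE : w *m Ip = lam *: (w *m Im) by rewrite -mulmxA vE /w mulmxKV.
set Mc := map_mx rc M.
have eigE : (c%:C * (1 + lam)) *: (w *m Mc) = (lam - 1) *: w.
  move: wE; rewrite /Ip /Im map_mxD map_mxB map_mx1 !map_real_scale -/Mc.
  rewrite mulmxDr mulmxBr mulmx1 -!scalemxAr; move: (w *m Mc) => X; clearbody w.
  move=> /rowP wE; apply/rowP => j; move: (wE j); rewrite !mxE.
  move: c%:C (X 0 j) (w 0 j) => cc x u wEj.
  have -> : cc * (1 + lam) * x = (u + cc * x) - lam * (u - cc * x) + (lam - 1) * u.
    by ring.
  by rewrite wEj subrr add0r.
have [->|lam_neqN1] := eqVneq lam (-1); first by rewrite normrN1.
have lam1_neq0 : 1 + lam != 0 by rewrite addrC addr_eq0.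
have c_neq0 : c%:C != 0 by rewrite eq_complex /= gt_eqF.
set mu := (lam - 1) / (c%:C * (1 + lam)).
have : eigenvalue Mc mu.
  apply/eigenvalueP; exists w => //.
  by rewrite /mu mulrC -scalerA -eigE scalerA mulVf ?scale1r ?mulf_neq0.
move=> /Re_eigenvalue_le0 Remu_le0.
apply: (@cayley_norm_le1 (c%:C * mu)).
  have Re_scale z : complex.Re (c%:C * z) = c * complex.Re z.
    by case: z => x y /=; rewrite mul0r subr0.
  by rewrite Re_scale mulr_ge0_le0 // ltW.
by rewrite /mu; field; rewrite lam1_neq0 c_neq0.
Qed.

End Cayley.

Definition diffmx n : 'M[R]_(n, n.+1) :=
  \matrix_(i, j) ((i == j :> nat)%:R - (i.+1 == j :> nat)%:R).

Lemma sum_delta n (x y : nat) : (x < n)%N ->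
  \sum_(l < n) ((x == l :> nat)%:R * (y == l :> nat)%:R : R) = (x == y)%:R.
Proof.
move=> x_lt_n; rewrite (bigD1 (Ordinal x_lt_n)) //= eqxx mul1r eq_sym big1 ?addr0 //.
by move=> l; rewrite -val_eqE eq_sym => /negbTE ->; rewrite mul0r.
Qed.

Lemma Atri_diffmx n : Atri n = - (diffmx n *m (diffmx n)^T).
Proof.
apply/matrixP => i j; rewrite !mxE.
under eq_bigr do rewrite !mxE mulrBl !mulrBr.
rewrite !sumrB !sum_delta ?ltnS ?ltn_ord ?(ltnW (ltn_ord _)) // eqSS -val_eqE /=.
case: (ltngtP i j) => [ij|ij|->].
- rewrite (ltn_eqF (leqW ij)) (gtn_eqF (leqW ij)) orbF.
  by case: eqP => _ /=; ring.
- rewrite (gtn_eqF (leqW ij)) (eq_sym j.+1) /=.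
  by case: eqP => _ /=; ring.
- by rewrite (ltn_eqF (ltnSn j)) (gtn_eqF (ltnSn j)) /=; ring.
Qed.

Lemma conjc_map_real m n (A : 'M[R]_(m, n)) :
  map_mx conjc (map_mx rc A) = map_mx rc A.
Proof. by rewrite -map_mx_comp; apply: eq_map_mx => x /=; rewrite oppr0. Qed.

Lemma node_mem (a b : R) N (j : 'I_N.-1) : a <= b -> a <= node a b N j <= b.
Proof.
move=> a_le_b; have jN : (j.+1 < N)%N by have := ltn_ord j; lia.
have N_neq0 : N%:R != 0 :> R by rewrite pnatr_eq0; lia.
have h_ge0 : 0 <= mesh a b N by rewrite divr_ge0 ?subr_ge0.
have Nh : N%:R * mesh a b N = b - a by rewrite mulrCA divff ?mulr1.
have jh_le : (j.+1)%:R * mesh a b N <= N%:R * mesh a b N.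
  by rewrite ler_wpM2r // ler_nat ltnW.
have jh_ge0 : 0 <= (j.+1)%:R * mesh a b N by rewrite mulr_ge0.
by rewrite /node; apply/andP; split; lra.
Qed.

Lemma map_Mblk (a b : R) N (gamma : R -> R) :
  let B := map_mx rc ((mesh a b N)^-1 *: diffmx N.-1) in
  map_mx rc (Mblk a b N gamma)
    = block_mx 0 1%:M (- (B *m adjmx B))
        (- diag_mx (map_mx rc (\row_j gamma (node a b N j)))).
Proof.
move=> B; rewrite /Mblk /Gam.
set B0 := (mesh a b N)^-1 *: diffmx N.-1.
have -> : mesh a b N ^- 2 *: Atri N.-1 = - (B0 *m B0^T).
  rewrite Atri_diffmx /B0 linearZ /= -scalemxAl -scalemxAr scalerA.
  by rewrite -expr2 exprVn scalerN.
rewrite map_block_mx map_mx0 map_mx1 !map_mxN map_mxM map_diag_mx -map_trmx.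
by rewrite /adjmx conjc_map_real.
Qed.

End FD11Stability.

Theorem proposition2 (R : rcfType) (a b : R) (N : nat) (gamma : R -> R) (k : R) :
  a < b -> (0 < N)%N -> 0 < k ->
  (forall x, a <= x <= b -> 0 <= gamma x) ->
  Iminus a b N gamma k \in unitmx /\ stable_amp (amplification a b N gamma k).
Proof.
move=> a_lt_b _ k_gt0 gamma_ge0.
have c_gt0 : 0 < k / 2 by rewrite divr_gt0.
have Re_eig mu : eigenvalue (map_mx (real_complex R) (Mblk a b N gamma)) mu ->
  complex.Re mu <= 0.
  rewrite map_Mblk; apply: damped_eigenvalue_Re_le0 => j.
  by rewrite !mxE ler0c gamma_ge0 // node_mem // ltW.
by split; [exact: cayley_unitmx Re_eig | exact: cayley_stable Re_eig].
Qed.
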